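(* Let $A$ be an involutive alphabet and let $\Gamma$ be an involutive $A$-tree. Then $\Gamma$ is regular if and only if $\Gamma$ is context-free.
   Context: An involutive alphabet is an alphabet $A$ with an involution $a\mapsto a^{-1}$ (fixed points allowed); any alphabet $A$ yields the involutive alphabet $A^{\pm1}=A\uplus A^{-1}$. An $A$-graph is a pair $(V,E)$ with $E\subseteq V\times A\times V$; an edge $(u,a,v)$ goes from $u$ to $v$ with label $a$. It is involutive if $(u,a,v)\in E\iff(v,a^{-1},u)\in E$; the inverse of the edge $(u,a,v)$ is $(v,a^{-1},u)$. The involutive closure of an $A$-graph adds all inverse edges (passing to $A^{\pm1}$ if $A$ is not involutive). A path is reduced if it contains no edge immediately followed by its inverse. A rooted involutive graph is a tree if every vertex is the end of a unique reduced path starting at the root (this does not depend on the root). An isomorphism of $A$-graphs is a bijection on vertices preserving and reflecting labeled edges; rooted isomorphisms also map root to root; for node-labeled $A$-graphs (with node labelings $p\colon V\to P$, $q\colon W\to Q$) an isomorphism is an $A$-isomorphism $\iota$ together with a bijection $\beta\colon P\to Q$ with $\beta(p(v))=q(\iota(v))$. Context-free: For a connected rooted involutive graph, the level of a node is its distance from the root; $\Gamma_n$ is the subgraph on nodes of level $\ge n$; for $v$ at level $n$, the end-cone $\Gamma(v)$ is the connected component of $\Gamma_n$ containing $v$, and its nodes of level exactly $n$ are its frontier points. An end-isomorphism is an $A$-isomorphism between two end-cones mapping frontier points onto frontier points. A connected involutive $A$-graph with $A$ a finite involutive alphabet is context-free if it has uniformly bounded degree and there is a choice of root for which there are only finitely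 many end-isomorphism classes of end-cones. Regular: A multi-edge NFA (mNFA) is $\mathcal{A}=(Q,A,T,\alpha,\lambda,\omega)$ with finite state set $Q$, finite alphabet $A$, finite transition set $T$ and maps $\alpha,\omega\colon T\to Q$ (start, end) and $\lambda\colon T\to A$ (label); multiple transitions with the same start, label and end are allowed. A run is a sequence $\tau_1\cdots\tau_\ell$ of transitions with $\omega(\tau_i)=\alpha(\tau_{i+1})$. For a state $p$, $\Gamma(p)$ is the graph whose nodes are the runs starting in $p$ (including the empty run $\varepsilon$, which is the root), with an edge from $\varrho$ to $\varrho\tau$ labeled $\lambda(\tau)$ for each transition $\tau$, then taking the involutive closure (viewing $A$ as involutive, passing to $A^{\pm1}$ if necessary); each node $\varrho$ is labeled by the state in which $\varrho$ ends ($p$ for $\varepsilon$). A rooted node-labeled involutive $A$-tree is regular if it is isomorphic as a rooted node-labeled $A$-graph to $\Gamma(p)$ for some state $p$ of some mNFA with alphabet $A$; a rooted involutive $A$-tree is regular if it is regular for some node labeling; an involutive $A$-tree is regular if it is regular for some choice of vertex as root. *)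

From Stdlib Require List.
From mathcomp Require Import all_boot.
Set Implicit Arguments. Unset Strict Implicit. Unset Printing Implicit Defensive.

Section Graphs.
Variables (A : Type) (inv : A -> A) (V : Type) (E : V -> A -> V -> Prop).

Definition involutive_graph : Prop :=
  forall u a v, E u a v <-> E v (inv a) u.

Fixpoint walk (u : V) (s : seq (A * V)) : Prop :=
  match s with
  | [::] => True
  | (a, v) :: s' => E u a v /\ walk v s'
  end.

Definition path_end (u : V) (s : seq (A * V)) : V := last u (map snd s).

Fixpoint reduced (u : V) (s : seq (A * V)) : Prop :=
  match s with
  | [::] => True
  | (a, v) :: s' =>
      match s' with
      | (b, w) :: _ => ~ (b = inv a /\ w = u)
      | [::] => True
      end /\ reduced v s'
  end.

Definition is_tree_at (r : V) : Prop :=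
  forall v, exists! s, walk r s /\ reduced r s /\ path_end r s = v.

(* An (unrooted) involutive A-tree: a tree for some (equivalently any) root. *)
Definition is_tree : Prop := exists r, is_tree_at r.

Definition connected : Prop :=
  forall u v, exists s, walk u s /\ path_end u s = v.

Definition bounded_degree : Prop :=
  exists N : nat, forall v (l : seq (A * V)),
    List.NoDup l -> (forall x, List.In x l -> E v x.1 x.2) -> size l <= N.

Definition level (r v : V) (n : nat) : Prop :=
  (exists s, walk r s /\ path_end r s = v /\ size s = n) /\
  (forall s, walk r s -> path_end r s = v -> n <= size s).

(* x belongs to the end-cone Gamma(v): the connected component of v in the
   induced subgraph Gamma_n on the nodes of level >= n, n = level of v *)
Definition cone (r v x : V) : Prop :=
  exists n, level r v n /\
    exists s, walk v s /\ path_end v s = x /\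
      List.Forall (fun y => exists m, level r y m /\ n <= m) (map snd s).

Definition frontier (r v x : V) : Prop :=
  cone r v x /\ exists n, level r v n /\ level r x n.

Definition end_iso (r v v' : V) : Prop :=
  exists f g : V -> V,
    (forall x, cone r v x -> cone r v' (f x)) /\
    (forall y, cone r v' y -> cone r v (g y)) /\
    (forall x, cone r v x -> g (f x) = x) /\
    (forall y, cone r v' y -> f (g y) = y) /\
    (forall x y a, cone r v x -> cone r v y -> (E x a y <-> E (f x) a (f y))) /\
    (forall x, cone r v x -> (frontier r v x <-> frontier r v' (f x))).

Definition finitely_many_cone_classes (r : V) : Prop :=
  exists reps : seq V, forall v, exists u, List.In u reps /\ end_iso r v u.

Definition context_free : Prop :=
  connected /\ bounded_degree /\ exists r, finitely_many_cone_classes r.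

End Graphs.

Record mNFA (A : Type) := MNFA {
  mstate : finType;
  mtrans : finType;
  msrc : mtrans -> mstate;
  mlbl : mtrans -> A;
  mtgt : mtrans -> mstate
}.

Section Runs.
Variables (A : Type) (inv : A -> A) (M : mNFA A).

Fixpoint is_run (p : mstate M) (s : seq (mtrans M)) : bool :=
  match s with
  | [::] => true
  | t :: s' => (msrc t == p) && is_run (mtgt t) s'
  end.

Definition run_node (p : mstate M) : Type := {s : seq (mtrans M) | is_run p s}.

Definition run_root (p : mstate M) : run_node p := exist _ [::] isT.

(* involutive closure of the edges rho --lambda(t)--> rho t *)
Definition run_edge (p : mstate M) (x : run_node p) (a : A) (y : run_node p) : Prop :=
  (exists t, sval y = rcons (sval x) t /\ a = mlbl t) \/
  (exists t, sval x = rcons (sval y) t /\ a = inv (mlbl t)).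

Definition run_label (p : mstate M) (x : run_node p) : mstate M :=
  last p (map (@mtgt A M) (sval x)).

End Runs.

Section Regular.
Variables (A : Type) (inv : A -> A) (V : Type) (E : V -> A -> V -> Prop).

Definition regular_labeled (P : Type) (lab : V -> P) (r : V) : Prop :=
  exists (M : mNFA A) (p : mstate M) (i : V -> @run_node A M p) (b : P -> mstate M),
    bijective i /\ i r = run_root p /\
    (forall u a v, E u a v <-> run_edge inv (i u) a (i v)) /\
    bijective b /\ (forall v, b (lab v) = run_label (i v)).

Definition regular_rooted (r : V) : Prop :=
  exists (P : Type) (lab : V -> P), regular_labeled lab r.

Definition regular_tree : Prop := exists r, regular_rooted r.

End Regular.

From Stdlib Require Import ClassicalEpsilon Wf_nat.
From mathcomp Require Import all_boot zify.
Set Implicit Arguments. Unset Strict Implicit. Unset Printing Implicit Defensive.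

(* In a tree, the distance to a chosen root changes by exactly one along every
   edge (depths in a tree have alternating parities) and every vertex other than
   the root has a unique edge leading closer to the root.  For such a leveling the
   end-cone of [v] is the set of descendants of [v], with [v] as its only frontier
   point, and an end-isomorphism is the same thing as an isomorphism of descendant
   sets sending [v] to [v'].  The graph [Γ(p)] is leveled by the length of runs, the
   descendants of a run are its extensions, and swapping prefixes identifies the
   cones of runs ending in the same state: cone classes are bounded by the states,
   degrees by the transitions.  Conversely, from representatives of the finitely
   many cone classes one builds an mNFA whose states are the classes and whose
   transitions from a class are the child edges of its representative; a run is
   sent to the image of its last representative under the composite of the chosen
   cone isomorphisms along the run, and this map is an isomorphism onto the tree. *)

Lemma mem_In (T : eqType) (x : T) (s : seq T) : x \in s -> List.In x s.
Proof. by elim: s => //= y s IH; rewrite in_cons => /orP [/eqP ->|/IH]; [left | right]. Qed.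

Lemma uniq_map_NoDup (T : Type) (U : eqType) (f : T -> U) (P : T -> Prop) (l : seq T) :
  (forall x y, P x -> P y -> f x = f y -> x = y) ->
  List.NoDup l -> (forall x, List.In x l -> P x) -> uniq (map f l).
Proof.
move=> finj; elim: l => //= x l IH /List.NoDup_cons_iff [nx nd] Pl.
have Px : P x by apply: Pl; left.
have {}Pl : forall y, List.In y l -> P y by move=> y iy; apply: Pl; right.
rewrite IH // andbT; apply/negP => fx; apply: nx.
elim: l fx Pl {IH nd} => //= y l IH; rewrite in_cons => /orP [/eqP fxy|fx] Pl.
  by left; apply: finj; [apply: Pl; left | exact: Px | rewrite fxy].
by right; apply: IH fx _ => z iz; apply: Pl; right.
Qed.

Lemma nth_In (T : Type) (x0 : T) (s : seq T) n : n < size s -> List.In (nth x0 s n) s.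
Proof. by elim: s n => //= x s IH [|n] /= hn; [left | right; apply: IH]. Qed.

Lemma In_nth (T : Type) (x0 : T) (s : seq T) x :
  List.In x s -> exists2 n, n < size s & nth x0 s n = x.
Proof. by elim: s => //= y s IH [->|/IH [n hn en]]; [exists 0 | exists n.+1]. Qed.

Lemma NoDup_nth_inj (T : Type) (x0 : T) (s : seq T) m n : List.NoDup s ->
  m < size s -> n < size s -> nth x0 s m = nth x0 s n -> m = n.
Proof.
elim: s m n => //= x s IH [|m] [|n] /List.NoDup_cons_iff [nx nd] //= hm hn e.
- by case: nx; rewrite e; apply: nth_In.
- by case: nx; rewrite -e; apply: nth_In.
- by rewrite (IH m n nd hm hn e).
Qed.

(* A duplicate-free list of [P]-elements of maximal length lists all of them. *)
Lemma NoDup_enum_of_bounded (X : Type) (P : X -> Prop) N :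
  (forall l, List.NoDup l -> (forall x, List.In x l -> P x) -> size l <= N) ->
  exists l, List.NoDup l /\ forall x, List.In x l <-> P x.
Proof.
move=> bounded.
pose good l := List.NoDup l /\ forall x, List.In x l -> P x.
have [d [[[l [[nd Pl] sl]] longest] _]] :
    has_unique_least_element le (fun d => exists l, good l /\ size l = N - d).
  apply: dec_inh_nat_subset_has_unique_least_element; first by move=> d; apply: classic.
  by exists N, [::]; split; [split; [exact: List.NoDup_nil | by []] | by rewrite subnn].
exists l; split=> // x; split=> [/Pl // | Px]; apply: NNPP => nx.
have gx : good (x :: l) by split; [constructor | move=> y [<- | /Pl]].
have le_N : (size l).+1 <= N by apply: bounded _ gx.1 gx.2.
have /leP : (d <= N - (size l).+1)%coq_nat by apply: longest; exists (x :: l); split=> //=; lia.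
by move: le_N; rewrite sl; lia.
Qed.

Lemma catI (T : Type) : right_injective (@cat T).
Proof. by move=> c x y; elim: c => //= a c IH [] /IH. Qed.


Section Walks.
Variables (A V : Type) (E : V -> A -> V -> Prop).

Lemma path_end_cat (u : V) (s1 s2 : seq (A * V)) :
  path_end u (s1 ++ s2) = path_end (path_end u s1) s2.
Proof. by rewrite /path_end map_cat last_cat. Qed.

Lemma path_end_rcons (u : V) (s : seq (A * V)) a w : path_end u (rcons s (a, w)) = w.
Proof. by rewrite /path_end map_rcons last_rcons. Qed.

Lemma walk_cat u (s1 s2 : seq (A * V)) :
  walk E u (s1 ++ s2) <-> walk E u s1 /\ walk E (path_end u s1) s2.
Proof.
elim: s1 u => [|[a v] s1 IH] u /=; first by rewrite /path_end /=; tauto.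
by rewrite IH; tauto.
Qed.

Lemma walk_rcons u (s : seq (A * V)) a w :
  walk E u (rcons s (a, w)) <-> walk E u s /\ E (path_end u s) a w.
Proof. by rewrite -cats1 walk_cat /=; tauto. Qed.

Definition map_steps (F : V -> V) (s : seq (A * V)) := [seq (x.1, F x.2) | x <- s].

Lemma walk_map (P : V -> Prop) (F : V -> V) u (s : seq (A * V)) :
  (forall y z a, P y -> P z -> E y a z -> E (F y) a (F z)) ->
  (forall z, List.In z (u :: map snd s) -> P z) -> walk E u s ->
  walk E (F u) (map_steps F s) /\ path_end (F u) (map_steps F s) = F (path_end u s).
Proof.
move=> FE; elim: s u => [|[a w] s IH] u //= Ps [Euw ws].
have [ws' es'] := IH w (fun z iz => Ps z (or_intror iz)) ws.
by split=> //; split=> //; apply: FE => //; apply: Ps; [left | right; left].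
Qed.

Lemma first_exit (Q : V -> Prop) u (s : seq (A * V)) :
  walk E u s -> Q u -> ~ Q (path_end u s) ->
  exists s1 b z s2, s = s1 ++ (b, z) :: s2 /\
    Q (path_end u s1) /\ ~ Q z /\ E (path_end u s1) b z.
Proof.
elim: s u => [|[a v] s IH] u /=; first by rewrite /path_end.
move=> [Euv ws] Qu nQ; case: (classic (Q v)) => [Qv|nQv]; last by exists [::], a, v, s.
have [s1 [b [z [s2 [-> rest]]]]] := IH v ws Qv nQ.
by exists ((a, v) :: s1), b, z, s2.
Qed.

End Walks.

Section Distance.
Variables (A V : Type) (E : V -> A -> V -> Prop) (inv : A -> A).
Hypothesis Hinvol : involutive_graph inv E.
Hypothesis Hconn : connected E.
Variable r : V.

Definition distance (v : V) : nat := epsilon (inhabits 0) (level E r v).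

Lemma distance_level v : level E r v (distance v).
Proof.
apply: epsilon_spec.
pose Q n := exists s, walk E r s /\ path_end r s = v /\ size s = n.
have [s [ws es]] := Hconn r v.
have [n [[Qn least] _]] : has_unique_least_element le Q.
  apply: dec_inh_nat_subset_has_unique_least_element; first by move=> n; apply: classic.
  by exists (size s), s.
exists n; split=> // s' ws' es'; apply/leP/least; by exists s'.
Qed.

Lemma distance_le (s : seq (A * V)) : walk E r s -> distance (path_end r s) <= size s.
Proof. by move=> ws; apply: (proj2 (distance_level _)). Qed.

Lemma distance_geodesic v : exists s, walk E r s /\ path_end r s = v /\ size s = distance v.
Proof. exact: (proj1 (distance_level v)). Qed.

Lemma distance_eq0 v : distance v = 0 <-> v = r.
Proof.
split=> [d0|->]; last by have := @distance_le [::] I; rewrite /path_end /=; lia.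
have [s [_ [es ss]]] := distance_geodesic v.
by move: ss es; rewrite d0 => /size0nil ->.
Qed.

Lemma distance_edge x a w : E x a w -> distance w <= (distance x).+1.
Proof.
move=> Exw; have [s [ws [es ss]]] := distance_geodesic x.
have := @distance_le (rcons s (a, w)).
by rewrite walk_rcons path_end_rcons size_rcons es ss; apply.
Qed.

Lemma distance_parent x : 0 < distance x ->
  exists a w, E x a w /\ distance x = (distance w).+1.
Proof.
move=> dx; have [s [ws [es ss]]] := distance_geodesic x.
case/lastP: s ws es ss => [|s [b y]]; first by move=> _ _ /= s0; lia.
rewrite walk_rcons path_end_rcons size_rcons => -[ws Eb] <- ss.
exists (inv b), (path_end r s); split; first exact: (proj1 (Hinvol _ _ _) Eb).
by have := distance_le ws; have := distance_edge Eb; lia.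
Qed.

End Distance.

(* The common shape of [Γ(p)], graded by the length of runs, and of a tree,
   graded by the distance to any root. *)
Record leveling (A V : Type) (E : V -> A -> V -> Prop) (r : V) (h : V -> nat) : Prop := {
  level_eq0 : forall v, h v = 0 <-> v = r;
  level_edge : forall x a y, E x a y -> h y = (h x).+1 \/ h x = (h y).+1;
  level_parent : forall x, 0 < h x -> exists a y, E x a y /\ h x = (h y).+1;
  level_parent_unique : forall x a y b z, E x a y -> E x b z ->
    h x = (h y).+1 -> h x = (h z).+1 -> a = b /\ y = z }.

Section Leveling.
Variables (A : Type) (inv : A -> A) (V : Type) (E : V -> A -> V -> Prop).
Hypothesis Hinvol : involutive_graph inv E.
Variables (r : V) (h : V -> nat).
Hypothesis L : leveling E r h.

Lemma walk_from_root v : exists s, walk E r s /\ path_end r s = v /\ size s = h v.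
Proof.
have [n hv] : exists n, h v = n by eexists.
elim: n v hv => [|n IH] v hv.
  by exists [::]; split=> //; split=> //; apply/esym/(level_eq0 L).
have [a [w [Evw hw]]] : exists a w, E v a w /\ h v = (h w).+1.
  by apply: (level_parent L); rewrite hv.
have [s [ws [es ss]]] := IH w ltac:(lia).
exists (rcons s (inv a, v)); rewrite walk_rcons path_end_rcons size_rcons es.
by split; [split=> //; exact: (proj1 (Hinvol _ _ _) Evw) | split=> //; lia].
Qed.

Lemma walk_to_root v : exists s, walk E v s /\ path_end v s = r.
Proof.
have [n hv] : exists n, h v = n by eexists.
elim: n v hv => [|n IH] v hv; first by exists [::]; split=> //; apply/(level_eq0 L).
have [a [w [Evw hw]]] : exists a w, E v a w /\ h v = (h w).+1.
  by apply: (level_parent L); rewrite hv.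
have [s [ws es]] := IH w ltac:(lia).
by exists ((a, w) :: s).
Qed.

Lemma leveling_connected : connected E.
Proof.
move=> u v; have [s1 [ws1 es1]] := walk_to_root u.
have [s2 [ws2 [es2 _]]] := walk_from_root v.
by exists (s1 ++ s2); rewrite walk_cat path_end_cat es1.
Qed.

Lemma level_walk_le u (s : seq (A * V)) : walk E u s -> h (path_end u s) <= h u + size s.
Proof.
elim: s u => [|[a v] s IH] u /=; first by rewrite /path_end /=; lia.
move=> [Euv ws]; rewrite -[path_end u _]/(path_end v s).
by have := IH v ws; case: (level_edge L Euv); lia.
Qed.

Lemma levelE v n : level E r v n <-> h v = n.
Proof.
have [s [ws [es ss]]] := walk_from_root v.
split=> [[[s' [ws' [es' ss']]] least]|<-].
  have := level_walk_le ws'; have := least s ws es.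
  by rewrite es' (level_eq0 L r).2 //; lia.
split; first by exists s.
move=> s' ws' <-; have := level_walk_le ws'.
by rewrite (level_eq0 L r).2.
Qed.

Definition child x a y := E x a y /\ h y = (h x).+1.

Definition descendant v y := exists s, walk E v s /\ path_end v s = y /\ h y = h v + size s.

Lemma descendant_refl v : descendant v v.
Proof. by exists [::]; split=> //; split=> //=; lia. Qed.

Lemma descendant_level v y : descendant v y -> h v <= h y.
Proof. by move=> [s [_ [_ ->]]]; lia. Qed.

Lemma descendant_level_eq v y : descendant v y -> h y = h v -> y = v.
Proof. by move=> [[|x s] [_ [<- hy]]] hv //; rewrite /= in hy; lia. Qed.

Lemma descendant_trans u v w : descendant u v -> descendant v w -> descendant u w.
Proof.
move=> [s1 [ws1 [es1 h1]]] [s2 [ws2 [es2 h2]]]; exists (s1 ++ s2).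
by rewrite walk_cat path_end_cat es1 size_cat; split=> //; split=> //; lia.
Qed.

Lemma child_descendant u a d : child u a d -> descendant u d.
Proof. by move=> [Eud hd]; exists [:: (a, d)]; split=> //; split=> //=; lia. Qed.

Lemma descendant_walk v (s : seq (A * V)) : walk E v s ->
  h (path_end v s) = h v + size s -> forall z, List.In z (map snd s) -> descendant v z.
Proof.
elim: s v => [|[a w] s IH] v //= [Evw ws].
rewrite -[path_end v _]/(path_end w s) => hs.
have cw : child v a w.
  by split=> //; have := level_walk_le ws; case: (level_edge L Evw); lia.
move=> z [<-|iz]; first exact: child_descendant cw.
apply: descendant_trans (child_descendant cw) (IH w ws _ z iz).
by case: cw => _; lia.
Qed.

(* An edge leaving the descendants of [v] either goes below [v] or is the
   parent edge of [v] itself, by uniqueness of parents. *)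
Lemma descendant_edge v y a z : descendant v y -> E y a z -> h v <= h z -> descendant v z.
Proof.
move=> [s [ws [es hs]]] Eyz hvz; case: (level_edge L Eyz) => hz.
  exists (rcons s (a, z)); rewrite walk_rcons path_end_rcons size_rcons es.
  by split=> //; split=> //; lia.
case/lastP: s ws es hs => [|s [b w]] /=.
  by move=> _ ey; rewrite -ey /path_end /= in hz; lia.
rewrite walk_rcons path_end_rcons size_rcons => -[ws Eb] ey hs; subst w.
have hy : h y = (h (path_end v s)).+1.
  by have := level_walk_le ws; case: (level_edge L Eb); lia.
have [_ ->] := level_parent_unique L Eyz (proj1 (Hinvol _ _ _) Eb) hz hy.
by exists s; split=> //; split=> //; lia.
Qed.

Lemma descendant_walk_above v y (s : seq (A * V)) : descendant v y -> walk E y s ->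
  (forall z, List.In z (map snd s) -> h v <= h z) -> descendant v (path_end y s).
Proof.
elim: s y => [|[a w] s IH] y //= dy [Eyw ws] above.
apply: IH ws (fun z iz => above z (or_intror iz)).
by apply: descendant_edge dy Eyw _; apply: above; left.
Qed.

Lemma cone_descendant v x : cone E r v x <-> descendant v x.
Proof.
split=> [[n [/levelE hv [s [ws [<- /List.Forall_forall above]]]]] | dx].
  apply: descendant_walk_above (descendant_refl v) ws _ => z /above [m [/levelE]].
  by rewrite hv => ->.
have [s [ws [es hs]]] := dx.
exists (h v); split; first exact/levelE.
exists s; split=> //; split=> //; apply/List.Forall_forall => z iz.
exists (h z); split; first exact/levelE.
by apply: descendant_level; apply: descendant_walk ws _ z iz; rewrite es.
Qed.

Lemma frontier_descendant v x : frontier E r v x <-> x = v.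
Proof.
split=> [[/cone_descendant dx [n [/levelE hv /levelE hx]]] | ->].
  by apply: descendant_level_eq dx _; rewrite hv hx.
split; first exact/cone_descendant/descendant_refl.
by exists (h v); split; apply/levelE.
Qed.

Lemma edge_childE (Hinv : involutive inv) x a y : E x a y <-> child x a y \/ child y (inv a) x.
Proof.
split=> [Exy | [[Exy _] | [Eyx _]]] //.
  case: (level_edge L Exy) => hy; [by left | right].
  by split=> //; exact: (proj1 (Hinvol _ _ _) Exy).
by move: (proj1 (Hinvol _ _ _) Eyx); rewrite Hinv.
Qed.

Record cone_iso (u x : V) (F G : V -> V) : Prop := {
  iso_descendant : forall y, descendant u y -> descendant x (F y);
  iso_inv_descendant : forall y, descendant x y -> descendant u (G y);
  iso_K : forall y, descendant u y -> G (F y) = y;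
  iso_inv_K : forall y, descendant x y -> F (G y) = y;
  iso_edge : forall a y z, descendant u y -> descendant u z -> E y a z <-> E (F y) a (F z);
  iso_root : F u = x }.

Lemma cone_iso_sym u x F G : cone_iso u x F G -> cone_iso x u G F.
Proof.
case=> FD GD FK GK FE Fu; split=> //.
  by move=> a y z dy dz; rewrite (FE a (G y) (G z) (GD _ dy) (GD _ dz)) !GK.
by rewrite -Fu FK //; apply: descendant_refl.
Qed.

Lemma cone_iso_comp u x w F G F' G' : cone_iso u x F G -> cone_iso x w F' G' ->
  cone_iso u w (F' \o F) (G \o G').
Proof.
case=> FD GD FK GK FE Fu [FD' GD' FK' GK' FE' Fu']; split=> /=.
- by move=> y /FD /FD'.
- by move=> y /GD' /GD.
- by move=> y dy; rewrite FK' ?FK //; apply: FD.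
- by move=> y dy; rewrite GK ?GK' //; apply: GD'.
- by move=> a y z dy dz; rewrite FE // FE' //; apply: FD.
- by rewrite Fu.
Qed.

Lemma cone_iso_walk u x F G v (s : seq (A * V)) : cone_iso u x F G ->
  (forall z, List.In z (v :: map snd s) -> descendant u z) -> walk E v s ->
  walk E (F v) (map_steps F s) /\ path_end (F v) (map_steps F s) = F (path_end v s).
Proof. by move=> I; apply: walk_map => y z a dy dz /(iso_edge I a dy dz). Qed.

Lemma monotone_walk_descendants v y (s : seq (A * V)) : walk E v s -> path_end v s = y ->
  h y = h v + size s -> forall z, List.In z (v :: map snd s) -> descendant v z.
Proof.
move=> ws es hs z [<-|iz]; first exact: descendant_refl.
by apply: descendant_walk ws _ z iz; rewrite es.
Qed.

Lemma cone_iso_level_le u x F G y : cone_iso u x F G -> descendant u y ->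
  h (F y) + h u <= h y + h x.
Proof.
move=> I [s [ws [es hs]]].
have [ws' es'] := cone_iso_walk I (monotone_walk_descendants ws es hs) ws.
by have := level_walk_le ws'; rewrite es' es (iso_root I) size_map; lia.
Qed.

Lemma cone_iso_level u x F G y : cone_iso u x F G -> descendant u y ->
  h (F y) + h u = h y + h x.
Proof.
move=> I dy; have := cone_iso_level_le I dy.
have := cone_iso_level_le (cone_iso_sym I) (iso_descendant I dy).
by rewrite (iso_K I dy); lia.
Qed.

Lemma cone_iso_child u x F G a d : cone_iso u x F G -> child u a d -> child x a (F d).
Proof.
move=> I cd; have [Eud hd] := cd; have dd := child_descendant cd.
split; first by rewrite -(iso_root I); apply/(iso_edge I a (descendant_refl u) dd).
by have := cone_iso_level I dd; rewrite hd; lia.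
Qed.

Lemma cone_iso_child_descendant u x F G a d y : cone_iso u x F G -> child u a d ->
  descendant d y -> descendant (F d) (F y).
Proof.
move=> I cd dy; have dd := child_descendant cd; have [s [ws [es hs]]] := dy.
have du : forall z, List.In z (d :: map snd s) -> descendant u z.
  by move=> z /(monotone_walk_descendants ws es hs); apply: descendant_trans.
have [ws' es'] := cone_iso_walk I du ws.
exists (map_steps F s); split=> //; rewrite es' es; split=> //.
have := cone_iso_level I dd; have := cone_iso_level I (descendant_trans dd dy).
by rewrite size_map; lia.
Qed.

Lemma cone_iso_restrict u x F G a d : cone_iso u x F G -> child u a d -> cone_iso d (F d) F G.
Proof.
move=> I cd; have cd' := cone_iso_child I cd.
have dd := child_descendant cd; have dd' := child_descendant cd'.
split=> //.
- by move=> y; apply: cone_iso_child_descendant I cd.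
- move=> y dy; have := cone_iso_child_descendant (cone_iso_sym I) cd' dy.
  by rewrite (iso_K I dd).
- by move=> y dy; apply: (iso_K I); apply: descendant_trans dd dy.
- by move=> y dy; apply: (iso_inv_K I); apply: descendant_trans dd' dy.
- by move=> b y z dy dz; apply: (iso_edge I); apply: descendant_trans dd _.
Qed.

Lemma end_iso_cone_iso u x : end_iso E r u x <-> exists F G, cone_iso u x F G.
Proof.
split=> [[F [G [FC [GC [FK [GK [FE Ffr]]]]]]] | [F [G I]]].
  exists F, G; split.
  - by move=> y /cone_descendant/FC/cone_descendant.
  - by move=> y /cone_descendant/GC/cone_descendant.
  - by move=> y /cone_descendant/FK.
  - by move=> y /cone_descendant/GK.
  - by move=> a y z /cone_descendant dy /cone_descendant dz; apply: FE.
  - apply/frontier_descendant/(Ffr u); last exact/frontier_descendant.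
    exact/cone_descendant/descendant_refl.
exists F, G; split; [|split; [|split; [|split; [|split]]]].
- by move=> y /cone_descendant/(iso_descendant I)/cone_descendant.
- by move=> y /cone_descendant/(iso_inv_descendant I)/cone_descendant.
- by move=> y /cone_descendant/(iso_K I).
- by move=> y /cone_descendant/(iso_inv_K I).
- by move=> y z a /cone_descendant dy /cone_descendant dz; apply: (iso_edge I).
move=> y /cone_descendant dy; rewrite !frontier_descendant; split=> [->|Fy].
  exact: iso_root I.
by rewrite -(iso_K I dy) Fy -(iso_root I) (iso_K I) //; apply: descendant_refl.
Qed.

End Leveling.

Section Runs.
Variables (A : Type) (M : mNFA A).

Lemma is_run_cat (q : mstate M) (s1 s2 : seq (mtrans M)) :
  is_run q (s1 ++ s2) = is_run q s1 && is_run (last q (map (@mtgt A M) s1)) s2.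
Proof. by elim: s1 q => [|t s1 IH] q //=; rewrite IH andbA. Qed.

Lemma is_run_rcons (q : mstate M) (s : seq (mtrans M)) t :
  is_run q (rcons s t) = is_run q s && (msrc t == last q (map (@mtgt A M) s)).
Proof. by rewrite -cats1 is_run_cat /= andbT. Qed.

End Runs.

Section RegularContextFree.
Variables (A : finType) (inv : A -> A) (V : Type) (E : V -> A -> V -> Prop).
Hypothesis Hinvol : involutive_graph inv E.
Variables (M : mNFA A) (p : mstate M) (i : V -> run_node p) (j : run_node p -> V) (r : V).
Hypotheses (ij : cancel i j) (ji : cancel j i) (ir : i r = run_root p).
Hypothesis iE : forall u a v, E u a v <-> run_edge inv (i u) a (i v).

Local Notation run v := (sval (i v)).
Let h v := size (run v).

Lemma run_inj x y : run x = run y -> x = y.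
Proof. by move=> e; apply: (can_inj ij); apply: val_inj. Qed.

Lemma run_prefix x (s1 s2 : seq (mtrans M)) : run x = s1 ++ s2 -> exists y, run y = s1.
Proof.
move=> e; have : is_run p s1 by move: (valP (i x)) => /=; rewrite e is_run_cat => /andP [].
by move=> s1_run; exists (j (exist _ s1 s1_run)); rewrite ji.
Qed.

Lemma run_leveling : leveling E r h.
Proof.
split.
- move=> v; split=> [/size0nil e|->]; last by rewrite /h ir.
  by apply: run_inj; rewrite e ir.
- by move=> x a y /iE [[t [e _]]|[t [e _]]]; rewrite /h e size_rcons; [left | right].
- move=> x; rewrite /h; case/lastP E0: (run x) => [|s t] // _.
  have [y ey] : exists y, run y = s.
    by apply: (run_prefix (x := x) (s2 := [:: t])); rewrite E0 cats1.
  exists (inv (mlbl t)), y; rewrite ey size_rcons; split=> //.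
  by apply/iE; right; exists t; rewrite E0 ey.
- move=> x a y b z /iE [[t [e _]]|[t [e ea]]]; first by rewrite /h e size_rcons; lia.
  move=> /iE [[t' [e' _]]|[t' [e' eb]]]; first by rewrite /h e' size_rcons; lia.
  move=> _ _; move: e'; rewrite e => /rcons_inj [/run_inj yz tt'].
  by rewrite ea eb tt' yz.
Qed.

Lemma descendant_runE v y : descendant E h v y <-> exists s, run y = run v ++ s.
Proof.
split=> [[s [ws [<- hs]]] | [s e]].
  elim: s v ws hs => [|[a w] s IH] v /=; first by exists [::]; rewrite cats0.
  move=> [Evw ws]; rewrite -[path_end v _]/(path_end w s) => hs.
  have := level_walk_le run_leveling ws.
  case/iE: Evw => [[t [e _]]|[t [e _]]]; last by move: hs; rewrite /h e size_rcons; lia.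
  move=> l; have [s' e'] : exists s', run (path_end w s) = run w ++ s'.
    by apply: IH ws _; move: hs l; rewrite /h e size_rcons; lia.
  by exists (t :: s'); rewrite e' e cat_rcons.
elim/last_ind: s y e => [|s t IH] y e.
  by rewrite cats0 in e; rewrite (run_inj e); apply: descendant_refl.
have [z ez] : exists z, run z = run v ++ s.
  by apply: (run_prefix (x := y) (s2 := [:: t])); rewrite e -cats1 catA.
apply: descendant_trans (IH z ez) (child_descendant (a := mlbl t) _).
split; last by rewrite /h e ez -rcons_cat size_rcons.
by apply/iE; left; exists t; rewrite e ez rcons_cat.
Qed.

Definition shift v u y := j (insubd (i u) (run u ++ drop (size (run v)) (run y))).

Lemma shift_run v u y s : run_label (i u) = run_label (i v) ->
  run y = run v ++ s -> run (shift v u y) = run u ++ s.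
Proof.
move=> same_state e; rewrite /shift ji e drop_size_cat //; apply: insubdK.
rewrite -[_ \in _]/(is_run p (run u ++ s)) is_run_cat (valP (i u)) /=.
move: same_state; rewrite /run_label => ->.
by move: (valP (i y)) => /=; rewrite e is_run_cat => /andP [].
Qed.

(* Runs ending in the same state have the same continuations. *)
Lemma shift_cone_iso v u : run_label (i u) = run_label (i v) ->
  cone_iso E h v u (shift v u) (shift u v).
Proof.
move=> same_state; have same_state' := esym same_state.
split.
- by move=> y /descendant_runE [s e]; apply/descendant_runE; exists s; apply: shift_run.
- by move=> y /descendant_runE [s e]; apply/descendant_runE; exists s; apply: shift_run.
- move=> y /descendant_runE [s e]; apply: run_inj.
  by rewrite e (shift_run same_state' (shift_run same_state e)).
- move=> y /descendant_runE [s e]; apply: run_inj.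
  by rewrite e (shift_run same_state (shift_run same_state' e)).
- move=> a y z /descendant_runE [s1 e1] /descendant_runE [s2 e2].
  rewrite !iE /run_edge (shift_run same_state e1) (shift_run same_state e2) e1 e2.
  by split=> -[] [t [e ea]]; [left | right | left | right]; exists t;
    move: e; rewrite !rcons_cat => /catI ->.
- by apply: run_inj; rewrite (shift_run (s := [::]) same_state) cats0.
Qed.

(* A child edge of [v] is coded by the transition it appends, the parent edge by [None]. *)
Definition edge_code v (x : A * V) : option (mtrans M) :=
  if size (run v) < size (run x.2) then ohead (rev (run x.2)) else None.

Lemma edge_code_inj v a w b z : E v a w -> E v b z ->
  edge_code v (a, w) = edge_code v (b, z) -> (a, w) = (b, z).
Proof.
have code_child c y t : run y = rcons (run v) t -> edge_code v (c, y) = Some t.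
  by move=> e; rewrite /edge_code /= e size_rcons ltnSn rev_rcons.
have code_parent c y t : run v = rcons (run y) t -> edge_code v (c, y) = None.
  by move=> e; rewrite /edge_code /= e size_rcons ltnNge leqnSn.
move=> /iE [[t [e ea]]|[t [e ea]]] /iE [[t' [e' eb]]|[t' [e' eb]]];
  rewrite ?(code_child _ _ _ e) ?(code_parent _ _ _ e) ?(code_child _ _ _ e')
    ?(code_parent _ _ _ e') //.
  by case=> tt'; subst; rewrite (run_inj (etrans e (esym e'))).
by move=> _; move: e'; rewrite e => /rcons_inj [/run_inj -> tt']; subst.
Qed.

Lemma run_bounded_degree : bounded_degree E.
Proof.
exists #|{: option (mtrans M)}| => v l nd El.
have codes_uniq : uniq (map (edge_code v) l).
  apply: (uniq_map_NoDup (P := fun x => E v x.1 x.2)) nd El => -[a w] [b z] /=.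
  exact: edge_code_inj.
by rewrite -(size_map (edge_code v)) -(card_uniqP codes_uniq); apply: max_card.
Qed.

Definition state_rep (q : mstate M) : V := epsilon (inhabits r) (fun v => run_label (i v) = q).

Lemma run_finitely_many_cone_classes : finitely_many_cone_classes E r.
Proof.
exists [seq state_rep q | q <- enum (mstate M)] => v.
set u := state_rep (run_label (i v)); exists u; split.
  by apply: List.in_map; apply: mem_In; rewrite mem_enum.
apply/(end_iso_cone_iso Hinvol run_leveling); exists (shift v u), (shift u v).
apply: shift_cone_iso; apply: (epsilon_spec (inhabits r) (fun w => run_label (i w) = _)).
by exists v.
Qed.

Lemma run_context_free : context_free E.
Proof.
split; first exact: (leveling_connected Hinvol run_leveling).
by split; [exact: run_bounded_degree | exists r; exact: run_finitely_many_cone_classes].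
Qed.

End RegularContextFree.

Lemma context_free_of_regular (A : finType) (inv : A -> A) (V : Type)
    (E : V -> A -> V -> Prop) : involutive_graph inv E -> regular_tree inv E -> context_free E.
Proof.
move=> Hinvol [r [P [lab [M [p [i [b [[j ij ji] [ir [iE _]]]]]]]]]].
exact: (run_context_free Hinvol ij ji ir iE).
Qed.

Section TreeDistance.
Variables (A : Type) (inv : A -> A) (V : Type) (E : V -> A -> V -> Prop).
Hypotheses (Hinv : involutive inv) (Hinvol : involutive_graph inv E).
Variable r0 : V.
Hypothesis tree : is_tree_at inv E r0.

Lemma reduced_rcons_prefix u (s : seq (A * V)) x : reduced inv u (rcons s x) -> reduced inv u s.
Proof.
elim: s u => [|[a v] s IH] u //= [H1 H2]; split; last exact: IH H2.
by case: s H1 {IH H2} => [|[b w] s].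
Qed.

Lemma reduced_rcons u (s : seq (A * V)) a w : reduced inv u s ->
  (forall s' b v, s = rcons s' (b, v) -> ~ (a = inv b /\ w = path_end u s')) ->
  reduced inv u (rcons s (a, w)).
Proof.
elim: s u => [|[b v] s IH] u //= [H1 H2] H.
case: s IH H1 H2 H => [|[c z] s] IH H1 H2 H; first by split=> //; apply: (H [::] b v).
split=> //; apply: IH => // s' b' v' es.
by apply: (H ((b, v) :: s') b' v'); rewrite es.
Qed.

Definition tree_path v : seq (A * V) :=
  epsilon (inhabits [::]) (fun s => walk E r0 s /\ reduced inv r0 s /\ path_end r0 s = v).

Lemma tree_path_spec v :
  walk E r0 (tree_path v) /\ reduced inv r0 (tree_path v) /\ path_end r0 (tree_path v) = v.
Proof.
have [s [Hs _]] := tree v.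
by apply: (epsilon_spec (inhabits [::]) (fun s => walk E r0 s /\ _)); exists s.
Qed.

Lemma tree_path_unique v s : walk E r0 s -> reduced inv r0 s -> path_end r0 s = v ->
  s = tree_path v.
Proof.
move=> ws rs es; have [s0 [_ U]] := tree v.
by rewrite -(U s (conj ws (conj rs es))) -(U _ (tree_path_spec v)).
Qed.

Lemma tree_path_inj : injective tree_path.
Proof.
move=> v w e; have [_ [_ <-]] := tree_path_spec v; have [_ [_ <-]] := tree_path_spec w.
by rewrite e.
Qed.

(* Appending an edge to the reduced path of [v] keeps it reduced unless the
   edge undoes its last step. *)
Lemma tree_path_edge v a w : E v a w ->
  tree_path w = rcons (tree_path v) (a, w) \/ tree_path v = rcons (tree_path w) (inv a, v).
Proof.
move=> Evw; have [wv [rv ev]] := tree_path_spec v.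
case: (classic (exists s b u, tree_path v = rcons s (b, u) /\ a = inv b /\ w = path_end r0 s)).
  move=> [s [b [u [e [-> ew]]]]]; right; rewrite Hinv.
  move: wv rv ev; rewrite e walk_rcons path_end_rcons => -[ws _] /reduced_rcons_prefix rs <-.
  by rewrite -(tree_path_unique ws rs (esym ew)).
move=> undo; left; symmetry; apply: tree_path_unique.
- by rewrite walk_rcons ev.
- apply: reduced_rcons => // s b u e [ea ew]; apply: undo; by exists s, b, u.
- exact: path_end_rcons.
Qed.

Let depth v := size (tree_path v).

Lemma depth_edge v a w : E v a w -> depth w = (depth v).+1 \/ depth v = (depth w).+1.
Proof. by case/tree_path_edge => e; rewrite /depth e size_rcons; [left | right]. Qed.

Lemma walk_depth_parity u (s : seq (A * V)) : walk E u s ->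
  exists k, depth u + depth (path_end u s) + size s = k.*2.
Proof.
elim: s u => [|[a v] s IH] u /=; first by exists (depth u); rewrite /path_end /=; lia.
move=> [Euv ws]; have [k hk] := IH v ws; rewrite -[path_end u _]/(path_end v s).
by case: (depth_edge Euv) => e; [exists k | exists k.+1]; lia.
Qed.

Definition in_subtree c y := exists t, tree_path y = tree_path c ++ t.

Lemma subtree_exit c y a z : in_subtree c y -> E y a z -> ~ in_subtree c z -> y = c.
Proof.
move=> [t et] Eyz out; case: (tree_path_edge Eyz) => e.
  by case: out; exists (rcons t (a, z)); rewrite e et rcons_cat.
move: et; rewrite e; case/lastP: t => [|t x]; first by rewrite cats0 -e => /tree_path_inj.
by rewrite -rcons_cat => /rcons_inj [e1 _]; case: out; exists t.
Qed.

Lemma subtree_enter c y a z : ~ in_subtree c y -> E y a z -> in_subtree c z ->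
  z = c /\ tree_path z = rcons (tree_path y) (a, z).
Proof.
move=> out Eyz [t et]; case: (tree_path_edge Eyz) => e.
  split=> //; move: et; rewrite e; case/lastP: t => [|t x].
    by rewrite cats0 -e => /tree_path_inj.
  by rewrite -rcons_cat => /rcons_inj [e1 _]; case: out; exists t.
by case: out; exists (rcons t (inv a, y)); rewrite e et rcons_cat.
Qed.

Variable r : V.
Hypothesis Hconn : connected E.
Local Notation dist := (distance E r).

(* Adjacent vertices have depths, hence distances to [r], of different parities. *)
Lemma distance_edge_step x a w : E x a w -> dist w = (dist x).+1 \/ dist x = (dist w).+1.
Proof.
move=> Exw; have := distance_edge Hconn r Exw.
have := distance_edge Hconn r (proj1 (Hinvol _ _ _) Exw).
have [s1 [w1 [e1 z1]]] := distance_geodesic Hconn r x.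
have [s2 [w2 [e2 z2]]] := distance_geodesic Hconn r w.
have [k1 p1] := walk_depth_parity w1; have [k2 p2] := walk_depth_parity w2.
by rewrite e1 z1 in p1; rewrite e2 z2 in p2; case: (depth_edge Exw); lia.
Qed.

(* Otherwise a geodesic from [r] to [w] would enter the subtree of [w] through [x],
   making [x] closer to [r] than [w]. *)
Lemma root_in_lower_subtree x a w : E x a w -> tree_path w = rcons (tree_path x) (a, w) ->
  dist x = (dist w).+1 -> in_subtree w r.
Proof.
move=> Exw ew hx; apply: NNPP => out.
have [s [ws [es ss]]] := distance_geodesic Hconn r w.
have end_in : ~ ~ in_subtree w (path_end r s) by rewrite es; apply; exists [::]; rewrite cats0.
have [s1 [b [z [s2 [e [out1 [/NNPP inz Ez]]]]]]] :=
  first_exit (Q := fun y => ~ in_subtree w y) ws out end_in.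
have [ez ez'] := subtree_enter out1 Ez inz; subst z.
move: ez'; rewrite ew => /rcons_inj [/tree_path_inj ex _].
have ws1 : walk E r s1 by move: ws; rewrite e walk_cat => -[].
by have := distance_le Hconn ws1; rewrite -ex; move: ss; rewrite e size_cat /=; lia.
Qed.

(* [r] lies in the subtree of [w] but [z] does not: a geodesic to [z] leaves that
   subtree, through [w], so it is longer than [dist w]. *)
Lemma lower_neighbours_not_parent_and_child x a w b z : E x a w -> E x b z ->
  dist x = (dist w).+1 -> dist x = (dist z).+1 ->
  tree_path w = rcons (tree_path x) (a, w) -> tree_path x = rcons (tree_path z) (inv b, x) ->
  False.
Proof.
move=> Exw Exz hw hz ew ez.
have rw := root_in_lower_subtree Exw ew hw.
have [s [ws [es ss]]] := distance_geodesic Hconn r z.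
have zout : ~ in_subtree w (path_end r s).
  rewrite es => -[t et]; move: (f_equal size et).
  by rewrite size_cat ew size_rcons ez size_rcons; lia.
have [s1 [c [y [s2 [e [in1 [out1 Ey]]]]]]] := first_exit (Q := in_subtree w) ws rw zout.
have ey := subtree_exit in1 Ey out1.
have ws1 : walk E r s1 by move: ws; rewrite e walk_cat => -[].
by have := distance_le Hconn ws1; rewrite ey; move: ss; rewrite e size_cat /=; lia.
Qed.

Lemma distance_parent_unique x a w b z : E x a w -> E x b z ->
  dist x = (dist w).+1 -> dist x = (dist z).+1 -> a = b /\ w = z.
Proof.
move=> Exw Exz hw hz.
case: (tree_path_edge Exw) => ew; case: (tree_path_edge Exz) => ez.
- have [t1 et1] := root_in_lower_subtree Exw ew hw.
  have [t2 et2] := root_in_lower_subtree Exz ez hz.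
  by move: et2; rewrite et1 ew ez !cat_rcons => /catI [-> ->].
- by case: (lower_neighbours_not_parent_and_child Exw Exz hw hz ew ez).
- by case: (lower_neighbours_not_parent_and_child Exz Exw hz hw ez ew).
- move: ez; rewrite ew => /rcons_inj [/tree_path_inj -> eab].
  by split=> //; apply: (inv_inj Hinv).
Qed.

Lemma distance_leveling : leveling E r dist.
Proof.
split.
- exact: distance_eq0 Hconn r.
- exact: distance_edge_step.
- exact: distance_parent Hinvol Hconn r.
- exact: distance_parent_unique.
Qed.

End TreeDistance.

Section ContextFreeRegular.
Variables (A : finType) (inv : A -> A) (V : Type) (E : V -> A -> V -> Prop).
Hypotheses (Hinv : involutive inv) (Hinvol : involutive_graph inv E).
Variables (r : V) (h : V -> nat).
Hypothesis L : leveling E r h.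
Hypothesis Hdeg : bounded_degree E.
Variable reps : seq V.
Hypothesis Hreps : forall v, exists u, List.In u reps /\ end_iso E r v u.

Local Notation child := (child E h).
Local Notation cone_iso := (cone_iso E h).

Lemma reps_nonempty : 0 < size reps.
Proof. by have [u [iu _]] := Hreps r; case: reps iu. Qed.

Definition class_rep (q : 'I_(size reps)) : V := nth r reps q.

Definition cone_class (v : V) : 'I_(size reps) :=
  epsilon (inhabits (Ordinal reps_nonempty)) (fun q => end_iso E r v (class_rep q)).

Lemma cone_class_end_iso v : end_iso E r v (class_rep (cone_class v)).
Proof.
apply: (epsilon_spec _ (fun q => end_iso E r v (class_rep q))).
have [u [iu vu]] := Hreps v; have [n hn nu] := In_nth r iu.
by exists (Ordinal hn); rewrite /class_rep /= nu.
Qed.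

Definition iso_from_rep v : (V -> V) * (V -> V) :=
  epsilon (inhabits (id, id)) (fun FG => cone_iso (class_rep (cone_class v)) v FG.1 FG.2).

Lemma iso_from_rep_spec v :
  cone_iso (class_rep (cone_class v)) v (iso_from_rep v).1 (iso_from_rep v).2.
Proof.
apply: (epsilon_spec _ (fun FG => cone_iso _ v FG.1 FG.2)).
have [F [G I]] := (end_iso_cone_iso Hinvol L _ _).1 (cone_class_end_iso v).
by exists (G, F); apply: cone_iso_sym.
Qed.

Definition children u : seq (A * V) :=
  epsilon (inhabits [::]) (fun l => List.NoDup l /\ forall x, List.In x l <-> child u x.1 x.2).

Lemma children_spec u :
  List.NoDup (children u) /\ forall x, List.In x (children u) <-> child u x.1 x.2.
Proof.
apply: (epsilon_spec _ (fun l => List.NoDup l /\ _)).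
have [N HN] := Hdeg; apply: (NoDup_enum_of_bounded (N := N)) => l nd Hl.
by apply: (HN u l nd) => x /Hl [].
Qed.

Definition transition := {q : 'I_(size reps) & 'I_(size (children (class_rep q)))}.

Definition trans_edge (t : transition) : A * V :=
  tnth (in_tuple (children (class_rep (tag t)))) (tagged t).

Lemma trans_edge_child t : child (class_rep (tag t)) (trans_edge t).1 (trans_edge t).2.
Proof.
apply/(proj2 (children_spec _)); rewrite /trans_edge (tnth_nth (trans_edge t)).
exact: nth_In.
Qed.

Lemma trans_edge_inj t1 t2 : tag t1 = tag t2 -> trans_edge t1 = trans_edge t2 -> t1 = t2.
Proof.
case: t1 t2 => q n1 [q' n2] /= eq; subst q'; rewrite /trans_edge /= => e.
set s := children (class_rep q) in n1 n2 e *; set x0 := tnth (in_tuple s) n1.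
congr existT; apply: ord_inj.
apply: (NoDup_nth_inj (x0 := x0) (proj1 (children_spec _)) (ltn_ord n1) (ltn_ord n2)).
by rewrite -!(tnth_nth x0 (in_tuple s)).
Qed.

Lemma trans_edge_onto q a d : child (class_rep q) a d ->
  exists2 t, tag t = q & trans_edge t = (a, d).
Proof.
move=> /(proj2 (children_spec _) (a, d)) /(In_nth (a, d)) [n hn en].
by exists (existT _ q (Ordinal hn)) => //; rewrite /trans_edge /= (tnth_nth (a, d)).
Qed.

Definition cone_nfa : mNFA A := @MNFA A 'I_(size reps) transition
  (fun t => tag t) (fun t => (trans_edge t).1) (fun t => cone_class (trans_edge t).2).

Local Notation p0 := (cone_class r).
Local Notation accepted s := (@is_run A cone_nfa p0 s).
Local Notation node := (@run_node A cone_nfa p0).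

Definition last_class (s : seq transition) : 'I_(size reps) :=
  last p0 (map (@mtgt A cone_nfa) s).

Lemma accepted_rcons s t : accepted (rcons s t) = accepted s && (tag t == last_class s).
Proof. exact: is_run_rcons. Qed.

Definition extend_iso (FG : (V -> V) * (V -> V)) (t : transition) :=
  let FGd := iso_from_rep (trans_edge t).2 in (FG.1 \o FGd.1, FGd.2 \o FG.2).

Definition run_iso (s : seq transition) := foldl extend_iso (iso_from_rep r) s.

Definition run_vertex (s : seq transition) : V := (run_iso s).1 (class_rep (last_class s)).

Lemma run_vertex_nil : run_vertex [::] = r.
Proof. exact: iso_root (iso_from_rep_spec r). Qed.

Lemma run_vertex_rcons s t : run_vertex (rcons s t) = (run_iso s).1 (trans_edge t).2.
Proof.
rewrite /run_vertex /run_iso foldl_rcons -/(run_iso s) /last_class map_rcons last_rcons /=.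
by rewrite (iso_root (iso_from_rep_spec _)).
Qed.

Lemma run_cone_iso s : accepted s ->
  cone_iso (class_rep (last_class s)) (run_vertex s) (run_iso s).1 (run_iso s).2.
Proof.
elim/last_ind: s => [_|s t IH]; first by rewrite run_vertex_nil; apply: iso_from_rep_spec.
rewrite accepted_rcons => /andP [acc /eqP tag_t].
have ct := trans_edge_child t; rewrite tag_t in ct.
rewrite run_vertex_rcons /run_iso foldl_rcons -/(run_iso s) /last_class map_rcons last_rcons.
exact: cone_iso_comp (iso_from_rep_spec (trans_edge t).2) (cone_iso_restrict L (IH acc) ct).
Qed.

Lemma run_vertex_child_rcons s t : accepted (rcons s t) ->
  child (run_vertex s) (trans_edge t).1 (run_vertex (rcons s t)).
Proof.
rewrite accepted_rcons run_vertex_rcons => /andP [acc /eqP tag_t].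
have ct := trans_edge_child t; rewrite tag_t in ct.
exact: (cone_iso_child L (run_cone_iso acc) ct).
Qed.

Lemma run_vertex_level s : accepted s -> h (run_vertex s) = size s.
Proof.
elim/last_ind: s => [_|s t IH]; first by rewrite run_vertex_nil; apply/(level_eq0 L).
move=> acc; have [_ ->] := run_vertex_child_rcons acc.
by move: acc; rewrite accepted_rcons size_rcons => /andP [/IH ->].
Qed.

Lemma run_vertex_child s a y : accepted s -> child (run_vertex s) a y ->
  exists2 t, tag t = last_class s & run_vertex (rcons s t) = y /\ (trans_edge t).1 = a.
Proof.
move=> acc cy; have I := run_cone_iso acc.
have [t tag_t et] := trans_edge_onto (cone_iso_child L (cone_iso_sym I) cy).
exists t => //; rewrite run_vertex_rcons et; split=> //.
exact: (iso_inv_K I (child_descendant cy)).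
Qed.

Lemma run_vertex_last_inj s t1 t2 : accepted (rcons s t1) -> accepted (rcons s t2) ->
  run_vertex (rcons s t1) = run_vertex (rcons s t2) -> (trans_edge t1).1 = (trans_edge t2).1 ->
  t1 = t2.
Proof.
rewrite !accepted_rcons !run_vertex_rcons => /andP [acc /eqP tag1] /andP [_ /eqP tag2] e ea.
have I := run_cone_iso acc.
have c1 := trans_edge_child t1; have c2 := trans_edge_child t2.
rewrite tag1 in c1; rewrite tag2 in c2.
apply: trans_edge_inj; first by rewrite tag1 tag2.
have ed : (trans_edge t1).2 = (trans_edge t2).2.
  by rewrite -(iso_K I (child_descendant c1)) -(iso_K I (child_descendant c2)) e.
by move: ea ed; case: (trans_edge t1) => ? ?; case: (trans_edge t2) => ? ? /= -> ->.
Qed.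

(* The last edges of two runs reaching the same vertex are both its unique parent edge. *)
Lemma run_vertex_inj s1 s2 : accepted s1 -> accepted s2 -> run_vertex s1 = run_vertex s2 ->
  s1 = s2.
Proof.
have [n n1] : exists n, size s1 = n by eexists.
elim: n s1 s2 n1 => [|n IH] s1 s2 n1 acc1 acc2 e.
  move: (run_vertex_level acc2); rewrite -e (run_vertex_level acc1) n1.
  by move=> /esym /size0nil ->; apply: size0nil.
have n2 : size s2 = n.+1 by rewrite -(run_vertex_level acc2) -e run_vertex_level.
case/lastP: s1 n1 acc1 e => [//|s1 t1] n1 acc1 e.
case/lastP: s2 n2 acc2 e => [//|s2 t2] n2 acc2 e.
have [E1 h1] := run_vertex_child_rcons acc1; have [E2 h2] := run_vertex_child_rcons acc2.
rewrite e in E1 h1.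
have [ea e12] :=
  level_parent_unique L (proj1 (Hinvol _ _ _) E1) (proj1 (Hinvol _ _ _) E2) h1 h2.
move: (acc1) (acc2); rewrite !accepted_rcons => /andP [acc1' _] /andP [acc2' _].
have es : s1 = s2 by apply: IH acc1' acc2' e12; move: n1; rewrite size_rcons => -[].
subst s2; congr rcons; exact: run_vertex_last_inj acc1 acc2 e (inv_inj Hinv ea).
Qed.

Lemma run_vertex_onto v : exists2 s, accepted s & run_vertex s = v.
Proof.
have [n hv] : exists n, h v = n by eexists.
elim: n v hv => [|n IH] v hv.
  by exists [::] => //; rewrite run_vertex_nil; apply/esym/(level_eq0 L).
have : 0 < h v by rewrite hv.
move=> /(level_parent L) [a [w [Evw hw]]].
have [s acc ew] := IH w ltac:(lia).
have cv : child (run_vertex s) (inv a) v.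
  by rewrite ew; split; [exact: (proj1 (Hinvol _ _ _) Evw) | lia].
have [t tag_t [et _]] := run_vertex_child acc cv.
by exists (rcons s t) => //; rewrite accepted_rcons acc tag_t eqxx.
Qed.

Definition vertex_of_node (rho : node) : V := run_vertex (sval rho).

Lemma vertex_of_node_inj : injective vertex_of_node.
Proof. by move=> rho sigma /(run_vertex_inj (valP rho) (valP sigma)) /val_inj. Qed.

Definition node_of_vertex (v : V) : node :=
  epsilon (inhabits (@run_root A cone_nfa p0)) (fun rho => vertex_of_node rho = v).

Lemma node_of_vertexK : cancel node_of_vertex vertex_of_node.
Proof.
move=> v; apply: (epsilon_spec _ (fun rho => vertex_of_node rho = v)).
by have [s acc <-] := run_vertex_onto v; exists (exist _ s acc).
Qed.

Lemma vertex_of_nodeK : cancel vertex_of_node node_of_vertex.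
Proof. by move=> rho; apply: vertex_of_node_inj; rewrite node_of_vertexK. Qed.

Lemma node_childE (rho sigma : node) a :
  child (vertex_of_node rho) a (vertex_of_node sigma) <->
  exists t, sval sigma = rcons (sval rho) t /\ a = mlbl t.
Proof.
have acc_rho : accepted (sval rho) := valP rho.
have acc_sigma : accepted (sval sigma) := valP sigma.
split=> [c | [t [e ->]]].
  have [t tag_t [et ea]] := run_vertex_child acc_rho c.
  have acc' : accepted (rcons (sval rho) t) by rewrite accepted_rcons acc_rho tag_t eqxx.
  by exists t; split; [apply: run_vertex_inj acc_sigma acc' _; rewrite et | rewrite -ea].
by rewrite e in acc_sigma; rewrite /vertex_of_node e; apply: run_vertex_child_rcons.
Qed.

Lemma node_edgeE (rho sigma : node) a :
  E (vertex_of_node rho) a (vertex_of_node sigma) <-> run_edge inv rho a sigma.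
Proof.
rewrite (edge_childE Hinvol L Hinv) !node_childE /run_edge.
by split=> -[] [t [e ea]]; [left | right | left | right]; exists t; split=> //;
  rewrite ?ea ?Hinv // -ea Hinv.
Qed.

Lemma cone_nfa_regular : regular_rooted inv E r.
Proof.
exists (mstate cone_nfa), (fun v => run_label (node_of_vertex v)).
exists cone_nfa, p0, node_of_vertex, id; split.
  by exists vertex_of_node; [exact: node_of_vertexK | exact: vertex_of_nodeK].
split.
  by apply: vertex_of_node_inj; rewrite node_of_vertexK /vertex_of_node run_vertex_nil.
split; first by move=> u a v; rewrite -{1}(node_of_vertexK u) -{1}(node_of_vertexK v) node_edgeE.
by split=> //; exists id.
Qed.

End ContextFreeRegular.

Lemma regular_of_context_free (A : finType) (inv : A -> A) (V : Type)
    (E : V -> A -> V -> Prop) : involutive inv -> involutive_graph inv E -> is_tree inv E ->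
  context_free E -> regular_tree inv E.
Proof.
move=> Hinv Hinvol [r0 tree] [conn [deg [r [reps Hreps]]]].
have L := distance_leveling Hinv Hinvol tree r conn.
by exists r; apply: (cone_nfa_regular Hinv Hinvol L deg Hreps).
Qed.

Theorem theorem3p3 (A : finType) (inv : A -> A) (Hinv : involutive inv)
  (V : Type) (E : V -> A -> V -> Prop)
  (Hinvol : involutive_graph inv E) (Htree : is_tree inv E) :
  regular_tree inv E <-> context_free E.
Proof.
split; first exact: context_free_of_regular.
exact: regular_of_context_free.
Qed.
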